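(* For every $n\geq1$ and all $N\times N$ real symmetric positive semidefinite matrices $A_{1},\ldots,A_{n},X$, \[ \Delta_{A_{1}}\Delta_{A_{2}}\cdots\Delta_{A_{n}}\det(X)=\sum_{k=0}^{n}(-1)^{n-k}\sum_{1\leq i_{1}<\cdots<i_{k}\leq n}\det(A_{i_{1}}+\cdots+A_{i_{k}}+X)\geq0 \] (the $k=0$ term being $(-1)^n\det X$). In other words, the restriction of $\det$ to the cone of positive semidefinite $N\times N$ real symmetric matrices has positive differences of every order $n\geq0$.
   Context: $(\Delta_{H}f)(X)=f(X+H)-f(X)$. A function $f$ on a convex cone has positive differences of order $n\geq1$ if $\Delta_{H_1}\cdots\Delta_{H_n}f(X)\geq0$ for all $X,H_1,\ldots,H_n$ in the cone, and of order $0$ if $f\geq0$. *)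

From HB Require Import structures.
From mathcomp Require Import all_boot all_order all_algebra.
From mathcomp Require Import reals.
Set Implicit Arguments. Unset Strict Implicit. Unset Printing Implicit Defensive.
Import Order.TTheory GRing.Theory Num.Theory.
Local Open Scope ring_scope.

Definition Delta (V : zmodType) (R : zmodType) (H : V) (f : V -> R) : V -> R :=
  fun X => f (X + H) - f X.

Fixpoint iterDelta (V : zmodType) (R : zmodType) (n : nat)
    (A : nat -> V) (f : V -> R) : V -> R :=
  match n with
  | 0 => f
  | n'.+1 => Delta (A 0%N) (iterDelta n' (fun i => A i.+1) f)
  end.

Definition psd (R : realType) (N : nat) (M : 'M[R]_N) : Prop :=
  M^T = M /\ forall v : 'cV[R]_N, 0 <= (v^T *m M *m v) 0 0.

From HB Require Import structures.
From mathcomp Require Import all_boot all_order all_algebra.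
From mathcomp Require Import reals.
From mathcomp Require Import ring.
Set Implicit Arguments. Unset Strict Implicit. Unset Printing Implicit Defensive.
Import Order.TTheory GRing.Theory Num.Theory.
Local Open Scope ring_scope.

(* Induction on the size N of the matrices.  To bound
   Delta_H (Delta_{A_2} ... Delta_{A_n} det) (X) for psd H, one Schur-complement
   step writes H as a nonnegative multiple of c c^T (c a column of H) plus a psd
   matrix with fewer nonzero diagonal entries; since
   Delta_{H1 + H2} g (X) = Delta_{H1} g (X + H2) + Delta_{H2} g (X), it suffices
   to treat H = a c c^T.  A congruence W |-> L W L^T multiplies det by det(L)^2,
   preserves psd matrices and maps b E_00 to a c c^T for suitable L and b >= 0.
   Finally Delta_{b E_00} det (W) = b det(W'), where the (0,0) minor W' of W is
   again a congruence image of W; as difference operators commute, the whole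
   expression becomes b det(L)^2 times an iterated difference of det in size
   N - 1 at psd arguments.  The explicit formula is inclusion-exclusion. *)

Section Differences.
Variables V R : zmodType.
Implicit Types (B : nat -> V) (f g : V -> R).

Lemma eq_Delta h f g : f =1 g -> Delta h f =1 Delta h g.
Proof. by move=> eq_fg X; rewrite /Delta !eq_fg. Qed.

Lemma eq_iterDelta n B f g : f =1 g -> iterDelta n B f =1 iterDelta n B g.
Proof. by elim: n B => [|n IHn] B eq_fg //=; apply/eq_Delta/IHn. Qed.

Lemma eq_iterDelta_dir n B B' f : B =1 B' -> iterDelta n B f =1 iterDelta n B' f.
Proof.
elim: n B B' => [|n IHn] B B' eqB X //=.
by rewrite /Delta eqB !(IHn _ (fun i => B' i.+1)).
Qed.

Lemma DeltaC a b f : Delta a (Delta b f) =1 Delta b (Delta a f).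
Proof.
move=> X; rewrite /Delta !opprB !addrA (addrAC X a b).
by rewrite [LHS]addrAC [RHS]addrAC (addrAC _ (- f (X + a))).
Qed.

Lemma Delta_iterDelta n B h f :
  Delta h (iterDelta n B f) =1 iterDelta n B (Delta h f).
Proof.
elim: n B => [|n IHn] B X //=.
by rewrite DeltaC; apply: eq_Delta.
Qed.

Lemma Delta0 f : Delta 0 f =1 fun=> 0.
Proof. by move=> X; rewrite /Delta addr0 subrr. Qed.

Lemma DeltaD a b f X : Delta (a + b) f X = Delta a f (X + b) + Delta b f X.
Proof. by rewrite /Delta addrA (addrAC X a b) addrA subrK. Qed.

Lemma iterDelta_cst n B (c : R) :
  iterDelta n B (fun=> c) =1 fun=> if n is 0 then c else 0.
Proof.
elim: n B => [|n IHn] B X //=.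
by rewrite /Delta !IHn subrr; case: n {IHn}.
Qed.

Lemma iterDelta_comp (W : zmodType) (phi : V -> W) n B (f : W -> R) X :
  {morph phi : x y / x + y} ->
  iterDelta n B (f \o phi) X = iterDelta n (phi \o B) f (phi X).
Proof. by move=> phiD; elim: n B X => [|n IHn] B X //=; rewrite /Delta !IHn phiD. Qed.

End Differences.

Lemma ord0_notin_lift0 n (S : {set 'I_n}) : ord0 \notin lift ord0 @: S.
Proof. by apply/imsetP => -[j _] /eqP; rewrite (negbTE (neq_lift _ _)). Qed.

Lemma sum_set_ordS (M : nmodType) n (F : {set 'I_n.+1} -> M) :
  \sum_(T : {set 'I_n.+1}) F T
  = \sum_(S : {set 'I_n}) (F (ord0 |: lift ord0 @: S) + F (lift ord0 @: S)).
Proof.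
have inj_lift0 := @lift_inj n.+1 ord0.
pose restr (T : {set 'I_n.+1}) : {set 'I_n} := [set i | lift ord0 i \in T].
have restrK (S : {set 'I_n}) : restr (lift ord0 @: S) = S.
  by apply/setP => i; rewrite !inE mem_imset.
rewrite big_split [LHS](bigID (fun T : {set 'I_n.+1} => ord0 \in T)) /=; congr (_ + _).
  rewrite (reindex_onto (fun S : {set 'I_n} => ord0 |: lift ord0 @: S) restr) => [|T T0].
    apply: eq_bigl => S; rewrite setU11 /=; apply/eqP/setP => i.
    by rewrite !inE (eq_sym (lift _ _)) (negbTE (neq_lift _ _)) mem_imset.
  apply/setP => i; rewrite !inE; case: (unliftP ord0 i) => [j|] ->.
    by rewrite (eq_sym (lift _ _)) (negbTE (neq_lift _ _)) mem_imset ?inE.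
  by rewrite eqxx T0.
rewrite (reindex_onto (fun S : {set 'I_n} => lift ord0 @: S) restr) => [|T T0].
  by apply: eq_bigl => S; rewrite ord0_notin_lift0 restrK eqxx.
apply/setP => i; case: (unliftP ord0 i) => [j|] ->.
  by rewrite mem_imset ?inE.
by rewrite (negbTE T0) (negbTE (ord0_notin_lift0 _)).
Qed.

Section RingValuedDifferences.
Variables (V : zmodType) (R : pzRingType).
Implicit Types (B : nat -> V) (f : V -> R).

Lemma iterDelta_mull n B (c : R) f X :
  iterDelta n B (fun Y => c * f Y) X = c * iterDelta n B f X.
Proof. by elim: n B X => [|n IHn] B X //=; rewrite /Delta !IHn mulrBr. Qed.

Lemma iterDelta_expand n B f X :
  iterDelta n B f X
  = \sum_(T : {set 'I_n}) (-1) ^+ (n - #|T|) * f (\sum_(i in T) B i + X).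
Proof.
elim: n B X => [|n IHn] B X.
  rewrite (big_pred1 set0) => [|T]; last by symmetry; apply/eqP/setP => -[].
  by rewrite big_set0 add0r cards0 mul1r.
rewrite /= /Delta !IHn sum_set_ordS -sumrB; apply: eq_bigr => S _.
have le_S_n : (#|S| <= n)%N by rewrite -[n in (_ <= n)%N]card_ord max_card.
rewrite big_setU1 ?ord0_notin_lift0 //= !big_imset /=; last first.
  by move=> ? ? _ _; apply: lift_inj.
rewrite cardsU1 ord0_notin_lift0 card_imset; last exact: lift_inj.
rewrite add1n subSS (subSn le_S_n) exprS mulN1r mulNr.
by rewrite [X + _]addrC addrA [_ + B 0%N]addrC.
Qed.

End RingValuedDifferences.

Definition congmx {R : pzSemiRingType} {m n : nat} (P : 'M[R]_(m, n))
    (Y : 'M[R]_n) : 'M[R]_m :=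
  P *m Y *m P^T.

Lemma congmxD (R : pzSemiRingType) m n (P : 'M[R]_(m, n)) :
  {morph congmx P : Y Z / Y + Z}.
Proof. by move=> Y Z; rewrite /congmx mulmxDr mulmxDl. Qed.

Lemma det_congmx (R : comPzRingType) n (P Y : 'M[R]_n) :
  \det (congmx P Y) = \det P ^+ 2 * \det Y.
Proof. by rewrite /congmx !det_mulmx det_tr mulrAC. Qed.

Lemma congmxK (R : comUnitRingType) n (P : 'M[R]_n) :
  P \in unitmx -> cancel (congmx (invmx P)) (congmx P).
Proof.
move=> uP Y; rewrite /congmx !mulmxA mulmxV // mul1mx -mulmxA -trmx_mul.
by rewrite mulmxV // trmx1 mulmx1.
Qed.

Lemma congmx_col0 (R : comPzRingType) n (P : 'M[R]_n.+1) (u a : R) :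
  a *: ((u *: col 0 P) *m (u *: col 0 P)^T)
  = congmx P ((a * u ^+ 2) *: delta_mx 0 0).
Proof.
rewrite /congmx colE linearZ /= trmx_mul trmx_delta -scalemxAl -scalemxAr.
rewrite -!mulmxA [delta_mx 0 0 *m (_ *m _)]mulmxA mul_delta_mx.
by rewrite !scalerA -scalemxAl -scalemxAr expr2 mulrA.
Qed.

Lemma iterDelta_det_congmx (R : comPzRingType) N n (P : 'M[R]_N) B X :
  iterDelta n (congmx P \o B) (fun M => \det M) (congmx P X)
  = \det P ^+ 2 * iterDelta n B (fun M => \det M) X.
Proof.
rewrite -iterDelta_comp; last exact: congmxD.
by rewrite -iterDelta_mull; apply: eq_iterDelta => Y /=; rewrite det_congmx.
Qed.

Lemma cV_col0_unitmx (F : fieldType) n (c : 'cV[F]_n.+1) :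
  exists2 L, L \in unitmx & exists u, c = u *: col 0 L.
Proof.
have [->|nz_c] := eqVneq c 0.
  by exists 1; [exact: unitmx1 | exists 0; rewrite scale0r].
exists (col_ebase c); first exact: col_ebase_unit.
have rank_c : \rank c = 1%N by apply/eqP; rewrite eqn_leq rank_leq_col lt0n mxrank_eq0.
exists (row_ebase c 0 0).
rewrite -[LHS]mulmx_ebase rank_c {1}(mx11_scalar (row_ebase c)).
rewrite mul_mx_scalar colE; congr (_ *: (_ *m _)).
by apply/matrixP => i j; rewrite !mxE ord1 eqxx andbT; case: i => -[].
Qed.

Definition bform {R : pzSemiRingType} {n : nat} (M : 'M[R]_n) (u v : 'cV[R]_n) : R :=
  (u^T *m M *m v) 0 0.

Section BilinearForm.
Variables (R : comPzRingType) (n : nat).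
Implicit Types (M : 'M[R]_n) (u v : 'cV[R]_n).

Lemma bformC M u v : M^T = M -> bform M u v = bform M v u.
Proof.
move=> sM; rewrite /bform -[in LHS](trmxK (u^T *m M *m v)) mxE.
by rewrite !trmx_mul trmxK sM mulmxA.
Qed.

Lemma bform_delta M i j : bform M (delta_mx i 0) (delta_mx j 0) = M i j.
Proof. by rewrite /bform trmx_delta -rowE -colE !mxE. Qed.

Lemma bformBl M M' u v : bform (M - M') u v = bform M u v - bform M' u v.
Proof. by rewrite /bform mulmxBr mulmxBl !mxE. Qed.

Lemma bform_addZ M u v s :
  bform M (u + s *: v) (u + s *: v)
  = bform M u u + s * bform M u v + s * bform M v u + s ^+ 2 * bform M v v.
Proof.
rewrite /bform [(_ + _)^T]linearD /= [(_ *: _)^T]linearZ /=.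
rewrite !mulmxDl !mulmxDr -!scalemxAl -!scalemxAr !mxE.
by rewrite [s * (s * _)]mulrA -expr2 !addrA.
Qed.

End BilinearForm.

Section Psd.
Variable R : realType.

Lemma psd0 n : psd (0 : 'M[R]_n).
Proof. by split=> [|v]; rewrite ?linear0 ?mulmx0 ?mul0mx ?mxE. Qed.

Lemma psdD n (M M' : 'M[R]_n) : psd M -> psd M' -> psd (M + M').
Proof.
case=> sM M_ge0 [sM' M'_ge0]; split=> [|v]; first by rewrite linearD /= sM sM'.
by rewrite mulmxDr mulmxDl mxE addr_ge0.
Qed.

Lemma psd_congmx m n (P : 'M[R]_(m, n)) (M : 'M[R]_n) : psd M -> psd (congmx P M).
Proof.
case=> sM M_ge0; split=> [|v]; first by rewrite /congmx !trmx_mul trmxK sM mulmxA.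
by have := M_ge0 (P^T *m v); rewrite /congmx trmx_mul trmxK !mulmxA.
Qed.

Lemma psd_diag_ge0 n (M : 'M[R]_n) i : psd M -> 0 <= M i i.
Proof. by case=> _ /(_ (delta_mx i 0)); rewrite -/(bform _ _ _) bform_delta. Qed.

Lemma psd_diag_eq0 n (M : 'M[R]_n) i j : psd M -> M i i = 0 -> M i j = 0.
Proof.
move=> [sM M_ge0] Mii0; apply/eqP; apply: contraT => nz_Mij.
pose s := - (M j j + 1) / (2 * M i j).
have := M_ge0 (delta_mx j 0 + s *: delta_mx i 0).
have Mji : M j i = M i j by rewrite -[in LHS]sM mxE.
rewrite -/(bform _ _ _) bform_addZ !bform_delta Mii0 Mji.
have -> : M j j + s * M i j + s * M i j + s ^+ 2 * 0 = - 1.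
  by rewrite /s; field.
by rewrite lerNr oppr0 ler10.
Qed.

Lemma psd_eq0 n (M : 'M[R]_n) : psd M -> (forall i, M i i = 0) -> M = 0.
Proof. by move=> psdM M0; apply/matrixP => i j; rewrite mxE (psd_diag_eq0 j psdM). Qed.

End Psd.

Definition schur {F : fieldType} {n : nat} (h : 'M[F]_n) (k : 'I_n) : 'M[F]_n :=
  h - (h k k)^-1 *: (col k h *m (col k h)^T).

Lemma schurE (F : fieldType) n (h : 'M[F]_n) k i j :
  schur h k i j = h i j - (h k k)^-1 * (h i k * h j k).
Proof. by rewrite !mxE big_ord1 !mxE. Qed.

Lemma bform_schur (F : fieldType) n (h : 'M[F]_n) k v : h^T = h ->
  bform (schur h k) v v = bform h v v - (h k k)^-1 * bform h v (delta_mx k 0) ^+ 2.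
Proof.
move=> sh; rewrite bformBl; congr (_ - _).
rewrite /bform -scalemxAr -scalemxAl mxE; congr (_ * _).
rewrite [in LHS]mulmxA -(mulmxA (v^T *m col k h)) mxE big_ord1 expr2.
rewrite colE trmx_mul sh; congr (_ * _).
  by rewrite mulmxA.
by rewrite -/(bform h (delta_mx k 0) v) bformC.
Qed.

Lemma psd_schur (R : realType) n (h : 'M[R]_n) k : psd h -> h k k != 0 -> psd (schur h k).
Proof.
move=> [sh h_ge0] nz_hkk; split=> [|v].
  apply/matrixP => i j; rewrite mxE !schurE.
  have hC a b : h a b = h b a by rewrite -[in LHS]sh mxE.
  by rewrite (hC j i) [h j k * _]mulrC.
rewrite -/(bform _ _ _) bform_schur //.
pose t := - bform h v (delta_mx k 0) / h k k.
have := h_ge0 (v + t *: delta_mx k 0).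
rewrite -/(bform _ _ _) bform_addZ bform_delta (bformC (delta_mx k 0) v sh).
suff -> : bform h v v + t * bform h v (delta_mx k 0) + t * bform h v (delta_mx k 0)
            + t ^+ 2 * h k k
          = bform h v v - (h k k)^-1 * bform h v (delta_mx k 0) ^+ 2 by [].
by rewrite /t; field.
Qed.

Definition diag_supp (R : nzRingType) n (M : 'M[R]_n) : {set 'I_n} :=
  [set i | M i i != 0].

Lemma diag_supp_schur (R : realType) n (h : 'M[R]_n) k :
  psd h -> k \in diag_supp h -> diag_supp (schur h k) \proper diag_supp h.
Proof.
rewrite inE => psd_h nz_hkk; apply/properP; split.
  apply/subsetP => i; rewrite !inE schurE; apply: contra => /eqP hii0.
  by rewrite hii0 (psd_diag_eq0 k psd_h hii0) mul0r mulr0 subrr.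
by exists k; rewrite !inE ?nz_hkk //= schurE mulKf // subrr eqxx.
Qed.

Lemma row'_col'_congmx (R : comPzRingType) n (W : 'M[R]_n.+1) :
  row' 0 (col' 0 W) = congmx (row' 0 1%:M) W.
Proof.
have row'E m (Y : 'M[R]_(n.+1, m)) : row' 0 Y = row' 0 1%:M *m Y by exact: rowsubE.
by rewrite /congmx row'E -mulmxA -[col' 0 W]trmxK tr_col' row'E trmx_mul trmxK.
Qed.

Lemma Delta_det_delta00 (R : comPzRingType) n (b : R) (W : 'M[R]_n.+1) :
  Delta (b *: delta_mx 0 0) (fun M => \det M) W = b * \det (row' 0 (col' 0 W)).
Proof.
rewrite /Delta (expand_det_row _ 0) [\det W](expand_det_row _ 0) -sumrB.
have cofactorE j : cofactor (W + b *: delta_mx 0 0) 0 j = cofactor W 0 j.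
  rewrite /cofactor; congr (_ * \det _); apply/matrixP => i' j'.
  by rewrite !mxE eq_sym (negbTE (neq_lift _ _)) /= mulr0 addr0.
under eq_bigr do rewrite cofactorE [X in X * _]mxE mulrDl addrAC subrr add0r.
rewrite big_ord_recl big1 ?addr0 => [|j _]; last first.
  by rewrite !mxE eq_sym (negbTE (neq_lift _ _)) /= mulr0 mul0r.
by rewrite !mxE eqxx /= mulr1 /cofactor /= expr0 mul1r.
Qed.

Definition pos_differences (V : zmodType) (R : numDomainType) (C : V -> Prop)
    (f : V -> R) : Prop :=
  forall n (B : nat -> V) X, (forall i, C (B i)) -> C X -> 0 <= iterDelta n B f X.

Section DetStep.
Variables (R : realType) (n : nat).
Hypothesis det_minor_pos : pos_differences (@psd R n) (fun M => \det M).

Lemma Delta_rank1_det_ge0 m (B : nat -> 'M[R]_n.+1) Y (c : 'cV[R]_n.+1) a :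
  0 <= a -> (forall i, psd (B i)) -> psd Y ->
  0 <= Delta (a *: (c *m c^T)) (iterDelta m B (fun M => \det M)) Y.
Proof.
move=> a_ge0 psdB psdY; have [L unit_L [u ->]] := cV_col0_unitmx c.
pose G : 'M[R]_n.+1 := (a * u ^+ 2) *: delta_mx 0 0.
pose D i := if i is i'.+1 then congmx (invmx L) (B i') else G.
rewrite congmx_col0.
change (0 <= iterDelta m.+1 (fun i => if i is i'.+1 then B i' else congmx L G)
                (fun M => \det M) Y).
rewrite -(congmxK unit_L Y) (@eq_iterDelta_dir _ _ m.+1 _ (congmx L \o D)); last first.
  by case=> [|i] //=; rewrite congmxK.
rewrite iterDelta_det_congmx mulr_ge0 ?sqr_ge0 //= Delta_iterDelta.
rewrite (eq_iterDelta _ _ (Delta_det_delta00 _)) iterDelta_mull.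
rewrite mulr_ge0 ?(mulr_ge0 a_ge0 (sqr_ge0 u)) //.
under eq_iterDelta do rewrite row'_col'_congmx.
rewrite iterDelta_comp; last exact: congmxD.
by apply: det_minor_pos => [i|]; do 2?apply: psd_congmx.
Qed.

Lemma Delta_psd_det_ge0 m (B : nat -> 'M[R]_n.+1) h X :
  (forall i, psd (B i)) -> psd h -> psd X ->
  0 <= Delta h (iterDelta m B (fun M => \det M)) X.
Proof.
move=> psdB; have [k] := ubnP #|diag_supp h|.
elim: k => // k IHk in h X *; rewrite ltnS => supp_h psd_h psdX.
have [supp0|[j supp_j]] := set_0Vmem (diag_supp h).
  rewrite (psd_eq0 psd_h) ?Delta0 // => i.
  by apply/eqP; apply: contraFT (in_set0 i); rewrite -supp0 inE.
have nz_hjj : h j j != 0 by move: supp_j; rewrite inE.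
have psd_schur_h := psd_schur psd_h nz_hjj.
have split_h : h = (h j j)^-1 *: (col j h *m (col j h)^T) + schur h j.
  by rewrite /schur addrC subrK.
rewrite {1}split_h DeltaD addr_ge0 //.
  apply: Delta_rank1_det_ge0 => //; last exact: psdD.
  by rewrite invr_ge0; apply: psd_diag_ge0.
apply: IHk => //; apply: leq_trans supp_h.
exact: proper_card (diag_supp_schur psd_h supp_j).
Qed.

End DetStep.

Lemma det_pos_differences (R : realType) n :
  pos_differences (@psd R n) (fun M => \det M).
Proof.
elim: n => [|n IHn] m B X psdB psdX.
  by rewrite (eq_iterDelta _ _ (@det_mx00 R)) iterDelta_cst; case: m.
case: m => [|m].
  have det_Delta : \det X = Delta X (fun M : 'M[R]_n.+1 => \det M) 0.
    by rewrite /Delta add0r det0 subr0.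
  by rewrite /= det_Delta; apply: (Delta_psd_det_ge0 IHn 0 psdB psdX (psd0 _ _)).
exact: (Delta_psd_det_ge0 IHn m (fun i => psdB i.+1) (psdB 0%N) psdX).
Qed.

Unset Implicit Arguments.

Theorem theorem5p6 (R : realType) (N n : nat) (A : 'I_n -> 'M[R]_N)
    (X : 'M[R]_N) :
  (1 <= n)%N ->
  (forall i, psd (A i)) -> psd X ->
  let Af := fun k : nat => match insub k with Some i => A i | None => 0 end in
  iterDelta n Af (fun M : 'M[R]_N => \det M) X
    = \sum_(S : {set 'I_n}) (-1) ^+ (n - #|S|)
          * \det (\sum_(i in S) A i + X)
  /\ 0 <= iterDelta n Af (fun M : 'M[R]_N => \det M) X.
Proof.
(* n >= 1 is not needed: the order-0 case is det X >= 0. *)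
move=> _ psdA psdX Af; split.
  rewrite iterDelta_expand; apply: eq_bigr => S _; congr (_ * \det (_ + _)).
  by apply: eq_bigr => i _; rewrite /Af valK.
apply: det_pos_differences => // k; rewrite /Af.
by case: insub => [i|]; [exact: psdA | exact: psd0].
Qed.
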